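(* Let $A=\{(x_k,y_k):k\in[\ell]\}\subset\mathbb N^d$ be finite, $d=m+n$. Then for all $\bar k\in[\ell]$: (a) $\mathbb D_{\mathrm{in}}(x_{\bar k},y_{\bar k},T_{\mathbb Q_\infty,V}(A))=\mathbb D_{\mathrm{in}}(x_{\bar k},y_{\bar k},Z_{\mathbb Q_\infty,V}(A))$; (b) $\mathbb D_{\mathrm{in}}(x_{\bar k},y_{\bar k},T_{\mathbb Q_\infty,C}(A))=\mathbb D_{\mathrm{in}}(x_{\bar k},y_{\bar k},Z_{\mathbb Q_\infty,C}(A))$; (c) $\mathbb D_{\mathrm{out}}(x_{\bar k},y_{\bar k},T_{\mathbb Q_\infty,V}(A))=\mathbb D_{\mathrm{out}}(x_{\bar k},y_{\bar k},Z_{\mathbb Q_\infty,V}(A))$; (d) $\mathbb D_{\mathrm{out}}(x_{\bar k},y_{\bar k},T_{\mathbb Q_\infty,C}(A))=\mathbb D_{\mathrm{out}}(x_{\bar k},y_{\bar k},Z_{\mathbb Q_\infty,C}(A))$.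
   Context: $\mathbb N$ is the set of non-negative integers; $[\ell]=\{1,\dots,\ell\}$; $1\!\!1$ denotes a vector of ones; $\vee$ is componentwise max. Max-Plus technologies: $T_{\mathbb Q_\infty,V}(A)=\{(x,y)\in\mathbb{R}_+^d: x\ge\bigvee_k(t_k1\!\!1_m+x_k),\ y\le\bigvee_k(t_k1\!\!1_n+y_k),\ \max_k t_k=0,\ t\in(\mathbb{R}\cup\{-\infty\})^\ell\}$, and $T_{\mathbb Q_\infty,C}(A)$ is the same without the constraint $\max_k t_k=0$. Discrete versions: $Z_{\mathbb Q_\infty,V}(A)=T_{\mathbb Q_\infty,V}(A)\cap\mathbb N^d$, $Z_{\mathbb Q_\infty,C}(A)=T_{\mathbb Q_\infty,C}(A)\cap\mathbb N^d$. Translation distance functions: $\mathbb D_{\mathrm{in}}(x,y,T)=\sup\{\delta\in\mathbb{R}:(x-\delta1\!\!1_m,y)\in T\}$, $\mathbb D_{\mathrm{out}}(x,y,T)=\sup\{\delta\in\mathbb{R}:(x,y+\delta1\!\!1_n)\in T\}$. *)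

From HB Require Import structures.
From mathcomp Require Import all_boot all_order all_algebra.
From mathcomp Require Import all_classical all_reals ereal.
Set Implicit Arguments. Unset Strict Implicit. Unset Printing Implicit Defensive.
Import Order.TTheory GRing.Theory Num.Theory.
Local Open Scope ring_scope.
Local Open Scope classical_set_scope.

(* Data: l points (x_k, y_k) in N^m x N^n, given as X k i and Y k j.
   A scalar t_k in R U {-oo} is an option R (None = -oo). *)
Section Defs.
Variables (R : realType) (m n l : nat).
Variables (X : 'I_l -> 'I_m -> nat) (Y : 'I_l -> 'I_n -> nat).

Definition point := (('I_m -> R) * ('I_n -> R))%type.

(* core Max-Plus constraints:
   x >= \/_k (t_k 1_m + x_k)  and  y <= \/_k (t_k 1_n + y_k), componentwise,
   with -oo terms dropping out of the max (max of nothing = -oo). *)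
Definition maxplus_core (t : 'I_l -> option R) (p : point) : Prop :=
  (forall i, (0 <= p.1 i)) /\ (forall j, (0 <= p.2 j)) /\
  (forall (k : 'I_l) (s : R) (i : 'I_m), t k = Some s -> s + (X k i)%:R <= p.1 i) /\
  (forall j : 'I_n, exists (k : 'I_l) (s : R), t k = Some s /\ p.2 j <= s + (Y k j)%:R).

Definition max_is_zero (t : 'I_l -> option R) : Prop :=
  (exists k, t k = Some 0) /\ (forall k s, t k = Some s -> s <= 0).

Definition T_V : set point :=
  [set p | exists t, maxplus_core t p /\ max_is_zero t].
Definition T_C : set point :=
  [set p | exists t, maxplus_core t p].

Definition is_natR (r : R) : Prop := exists k : nat, r = k%:R.

Definition discretize (T : set point) : set point :=
  [set p | T p /\ (forall i, is_natR (p.1 i)) /\ (forall j, is_natR (p.2 j))].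

Definition Z_V := discretize T_V.
Definition Z_C := discretize T_C.
End Defs.

Definition D_in (R : realType) (m n : nat) (x : 'I_m -> R) (y : 'I_n -> R)
  (T : set (point R m n)) : \bar R :=
  ereal_sup [set (d%:E)%E | d in [set d : R | T ((fun i => x i - d), y)]].

Definition D_out (R : realType) (m n : nat) (x : 'I_m -> R) (y : 'I_n -> R)
  (T : set (point R m n)) : \bar R :=
  ereal_sup [set (d%:E)%E | d in [set d : R | T (x, (fun j => y j + d))]].

(* Let delta be feasible for the continuous technology at the integer point
   (x_k, y_k), witnessed by scalars t.  For the input distance round t down and
   delta up; for the output distance round both up.  Every Max-Plus constraint
   compares a real expression with an integer, so it survives the rounding, and
   rounding preserves max_k t_k = 0.  The result is an integer point of the
   technology at translation ceil(delta) >= delta; since the discrete technology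
   is a subset of the continuous one, the two suprema coincide. *)
From Pilot Require Import Defs.
From HB Require Import structures.
From mathcomp Require Import all_boot all_order all_algebra.
From mathcomp Require Import all_classical all_reals ereal.
From mathcomp Require Import lra.
Set Implicit Arguments. Unset Strict Implicit. Unset Printing Implicit Defensive.
Import Order.TTheory GRing.Theory Num.Theory.
Local Open Scope ring_scope.
Local Open Scope classical_set_scope.

Section IntegerRounding.
Variable R : archiRealDomainType.

Definition floorR (x : R) : R := (Num.floor x)%:~R.
Definition ceilR (x : R) : R := (Num.ceil x)%:~R.

Lemma floorR_int (x : R) : floorR x \is a Num.int.
Proof. exact: intr_int. Qed.

Lemma ceilR_int (x : R) : ceilR x \is a Num.int.
Proof. exact: intr_int. Qed.

Lemma floorR_le (x : R) : floorR x <= x.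
Proof. exact: floor_le. Qed.

Lemma ceilR_ge (x : R) : x <= ceilR x.
Proof. exact: ceil_ge. Qed.

Lemma le_floorR : {homo floorR : x y / x <= y}.
Proof. by move=> x y xy; rewrite ler_int le_floor. Qed.

Lemma le_ceilR : {homo ceilR : x y / x <= y}.
Proof. by move=> x y xy; rewrite ler_int le_ceil. Qed.

Lemma floorR0 : floorR 0 = 0.
Proof. by rewrite /floorR floor0. Qed.

Lemma ceilR0 : ceilR 0 = 0.
Proof. by rewrite /ceilR ceil0. Qed.

Lemma int_le_floorR (x z : R) : z \is a Num.int -> z <= x -> z <= floorR x.
Proof. by move=> /floorK zE; rewrite -zE ler_int floor_ge_int. Qed.

Lemma ceilR_le_int (x z : R) : z \is a Num.int -> x <= z -> ceilR x <= z.
Proof. by move=> /floorK zE; rewrite -zE ler_int ceil_le_int. Qed.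

End IntegerRounding.
Arguments floorR {R}.
Arguments ceilR {R}.

Lemma ereal_sup_EFin_cofinal (R : realType) (A B : set R) : B `<=` A ->
  (forall a, A a -> exists2 b, B b & a <= b) ->
  ereal_sup [set a%:E | a in A] = ereal_sup [set b%:E | b in B].
Proof.
move=> BA AB; apply/eqP; rewrite eq_le; apply/andP; split.
- apply: ge_ereal_sup => _ [a Aa <-]; have [b Bb ab] := AB a Aa.
  by apply: le_ereal_sup_tmp; exists b%:E; [exists b | rewrite lee_fin].
- by apply: ereal_sup_le => _ [b Bb <-]; exists b => //; exact: BA.
Qed.

Lemma is_natR_int (R : realType) (x : R) :
  x \is a Num.int -> 0 <= x -> is_natR x.
Proof.
move=> xi x0; have /natrP[k ->] : x \is a Num.nat by rewrite natrEint xi.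
by exists k.
Qed.

Section TranslationDistance.
Variables (R : realType) (m n : nat) (x : 'I_m -> R) (y : 'I_n -> R).
(* [point] alone would refer to the pointed-type projection of classical_sets. *)
Implicit Type T : set (Defs.point R m n).

Lemma discretize_sub T : discretize T `<=` T.
Proof. by move=> p []. Qed.

Lemma D_in_discretize T :
  (forall d, T (fun i => x i - d, y) ->
             discretize T (fun i => x i - ceilR d, y)) ->
  D_in x y T = D_in x y (discretize T).
Proof.
move=> Tceil; apply: ereal_sup_EFin_cofinal => [d /discretize_sub //|d Td].
by exists (ceilR d); [exact: Tceil | exact: ceilR_ge].
Qed.

Lemma D_out_discretize T :
  (forall d, T (x, fun j => y j + d) ->
             discretize T (x, fun j => y j + ceilR d)) ->
  D_out x y T = D_out x y (discretize T).
Proof.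
move=> Tceil; apply: ereal_sup_EFin_cofinal => [d /discretize_sub //|d Td].
by exists (ceilR d); [exact: Tceil | exact: ceilR_ge].
Qed.

End TranslationDistance.

Section RoundedWitness.
Variables (R : realType) (m n l : nat).
Variables (X : 'I_l -> 'I_m -> nat) (Y : 'I_l -> 'I_n -> nat).
Variables (x : 'I_m -> nat) (y : 'I_n -> nat).

Definition round_scalars (r : R -> R) (t : 'I_l -> option R) : 'I_l -> option R :=
  fun k => omap r (t k).

Lemma max_is_zero_round (r : R -> R) (t : 'I_l -> option R) :
  {homo r : a b / a <= b} -> r 0 = 0 ->
  max_is_zero t -> max_is_zero (round_scalars r t).
Proof.
move=> r_mono r0 [[k tk0] t_le0]; split.
  by exists k; rewrite /round_scalars tk0 /= r0.
move=> k' s; rewrite /round_scalars; case tk: (t k') => [s'|] //= [<-].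
by rewrite -r0; apply: r_mono; exact: t_le0 tk.
Qed.

Lemma maxplus_core_discretize (T : set (Defs.point R m n)) t p :
  T p -> maxplus_core X Y t p ->
  (forall i, p.1 i \is a Num.int) -> (forall j, p.2 j \is a Num.int) ->
  discretize T p.
Proof.
by move=> Tp [x0 [y0 _]] xi yi; split=> //; split=> ?; apply: is_natR_int.
Qed.

Lemma maxplus_core_in_round t d :
  maxplus_core X Y t (fun i => (x i)%:R - d, fun j => (y j)%:R) ->
  maxplus_core X Y (round_scalars floorR t)
    (fun i => (x i)%:R - ceilR d, fun j => (y j)%:R).
Proof.
move=> [/= x0 [/= y0 [/= xle /= yge]]]; split=> [i|]; last split=> //; last split.
- by have := x0 i; rewrite !subr_ge0 => /ceilR_le_int ->; rewrite ?rpred_nat.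
- move=> k s i; rewrite /round_scalars; case tk: (t k) => [s'|] //= [<-].
  have : ceilR d <= (x i)%:R - (X k i)%:R - floorR s'.
    apply: ceilR_le_int; first by rewrite !rpredB ?rpred_nat ?floorR_int.
    by have := xle k s' i tk; have := floorR_le s'; lra.
  lra.
- move=> j; have [k [s [tk yle]]] := yge j.
  exists k, (floorR s); split; first by rewrite /round_scalars tk.
  have : (y j)%:R - (Y k j)%:R <= floorR s.
    by apply: int_le_floorR; [rewrite rpredB ?rpred_nat | lra].
  lra.
Qed.

Lemma maxplus_core_out_round t d :
  maxplus_core X Y t (fun i => (x i)%:R, fun j => (y j)%:R + d) ->
  maxplus_core X Y (round_scalars ceilR t)
    (fun i => (x i)%:R, fun j => (y j)%:R + ceilR d).
Proof.
move=> [/= x0 [/= y0 [/= xle /= yge]]]; split=> //; split=> [j /=|]; last split.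
- by have := y0 j; have := ceilR_ge d; lra.
- move=> k s i; rewrite /round_scalars; case tk: (t k) => [s'|] //= [<-].
  have : ceilR s' <= (x i)%:R - (X k i)%:R.
    by apply: ceilR_le_int; [rewrite rpredB ?rpred_nat | have := xle k s' i tk; lra].
  lra.
- move=> j; have [k [s [tk yle]]] := yge j.
  exists k, (ceilR s); split; first by rewrite /round_scalars tk.
  have : ceilR d <= ceilR s + (Y k j)%:R - (y j)%:R.
    apply: ceilR_le_int; first by rewrite rpredB ?rpredD ?rpred_nat ?ceilR_int.
    by have := ceilR_ge s; lra.
  rewrite /=; lra.
Qed.

Lemma T_V_in_round (d : R) :
  T_V X Y (fun i => (x i)%:R - d, fun j => (y j)%:R) ->
  Z_V X Y (fun i => (x i)%:R - ceilR d, fun j => (y j)%:R).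
Proof.
case=> t [core zero]; have core' := maxplus_core_in_round core.
apply: (maxplus_core_discretize _ core') => [|i|j] /=; last 2 first.
- by rewrite rpredB ?rpred_nat ?ceilR_int.
- by rewrite rpred_nat.
exists (round_scalars floorR t); split=> //.
by apply: max_is_zero_round zero; [exact: le_floorR | exact: floorR0].
Qed.

Lemma T_C_in_round (d : R) :
  T_C X Y (fun i => (x i)%:R - d, fun j => (y j)%:R) ->
  Z_C X Y (fun i => (x i)%:R - ceilR d, fun j => (y j)%:R).
Proof.
case=> t core; have core' := maxplus_core_in_round core.
apply: (maxplus_core_discretize _ core') => [|i|j] /=; last 2 first.
- by rewrite rpredB ?rpred_nat ?ceilR_int.
- by rewrite rpred_nat.
by exists (round_scalars floorR t).
Qed.

Lemma T_V_out_round (d : R) :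
  T_V X Y (fun i => (x i)%:R, fun j => (y j)%:R + d) ->
  Z_V X Y (fun i => (x i)%:R, fun j => (y j)%:R + ceilR d).
Proof.
case=> t [core zero]; have core' := maxplus_core_out_round core.
apply: (maxplus_core_discretize _ core') => [|i|j] /=; last 2 first.
- by rewrite rpred_nat.
- by rewrite rpredD ?rpred_nat ?ceilR_int.
exists (round_scalars ceilR t); split=> //.
by apply: max_is_zero_round zero; [exact: le_ceilR | exact: ceilR0].
Qed.

Lemma T_C_out_round (d : R) :
  T_C X Y (fun i => (x i)%:R, fun j => (y j)%:R + d) ->
  Z_C X Y (fun i => (x i)%:R, fun j => (y j)%:R + ceilR d).
Proof.
case=> t core; have core' := maxplus_core_out_round core.
apply: (maxplus_core_discretize _ core') => [|i|j] /=; last 2 first.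
- by rewrite rpred_nat.
- by rewrite rpredD ?rpred_nat ?ceilR_int.
by exists (round_scalars ceilR t).
Qed.

End RoundedWitness.

Theorem mainTheorem7 (R : realType) (m n l : nat)
  (X : 'I_l -> 'I_m -> nat) (Y : 'I_l -> 'I_n -> nat) (kb : 'I_l) :
  let xk := fun i : 'I_m => ((X kb i)%:R : R) in
  let yk := fun j : 'I_n => ((Y kb j)%:R : R) in
  [/\ D_in xk yk (@T_V R _ _ _ X Y) = D_in xk yk (@Z_V R _ _ _ X Y),
      D_in xk yk (@T_C R _ _ _ X Y) = D_in xk yk (@Z_C R _ _ _ X Y),
      D_out xk yk (@T_V R _ _ _ X Y) = D_out xk yk (@Z_V R _ _ _ X Y) &
      D_out xk yk (@T_C R _ _ _ X Y) = D_out xk yk (@Z_C R _ _ _ X Y)].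
Proof.
move=> xk yk; split.
- exact/D_in_discretize/T_V_in_round.
- exact/D_in_discretize/T_C_in_round.
- exact/D_out_discretize/T_V_out_round.
- exact/D_out_discretize/T_C_out_round.
Qed.
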